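(* Let $L=(E,\preceq_E)$ be an object-centric event log and let $ot$ be an object type (serving as a case notion). Then the flattened event log $L^{ot}=(E^{ot},\preceq_E^{ot})$ is itself an object-centric event log, i.e. $\preceq_E^{ot}$ is a partial order (reflexive, antisymmetric, transitive) on $E^{ot}$, distinct events of $E^{ot}$ have distinct event identifiers, and $e_1\preceq_E^{ot} e_2$ implies $\pi_{time}(e_1)\le\pi_{time}(e_2)$ for all $e_1,e_2\in E^{ot}$.
   Context: Fix universes: event identifiers $\mathcal{U}_{ei}$, activity names $\mathcal{U}_{act}$, timestamps $\mathcal{U}_{time}$ (totally ordered by $\le$), object types $\mathcal{U}_{ot}$ (containing a special type $case$), object identifiers $\mathcal{U}_{oi}$ with a function $type:\mathcal{U}_{oi}\to\mathcal{U}_{ot}$, attribute names $\mathcal{U}_{att}$ and values $\mathcal{U}_{val}$. Event identifiers are assumed to include pairs $(x,i)$ of an event identifier $x$ and an object identifier $i$. An object mapping is a partial function $omap$ from object types to finite sets of object identifiers such that every $oi\in omap(ot)$ has $type(oi)=ot$; if $ot\notin dom(omap)$ we set $omap(ot)=\emptyset$. A value map $vmap$ is a partial function from attribute names to values. An event is a tuple $e=(ei,act,time,omap,vmap)$; write $\pi_{ei}(e)=ei$, $\pi_{act}(e)=act$, $\pi_{time}(e)=time$, $\pi_{omap}(e)=omap$, $\pi_{vmap}(e)=vmap$. An object-centric event log is a pair $L=(E,\preceq_E)$ where $E$ is a set of events and $\preceq_E\subseteq E\times E$ satisfies: $\preceq_E$ is a partial order (reflexive, antisymmetric, transitive); for all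 $e_1,e_2\in E$, $\pi_{ei}(e_1)=\pi_{ei}(e_2)$ implies $e_1=e_2$; and $e_1\preceq_E e_2$ implies $\pi_{time}(e_1)\le\pi_{time}(e_2)$. For a function $f$, $f\oplus(x,y)$ denotes the function with domain $dom(f)\cup\{x\}$ mapping $x$ to $y$ and agreeing with $f$ elsewhere. Flattening: for $e\in E$ and $i\in\pi_{omap}(e)(ot)$ let $e_i=((\pi_{ei}(e),i),\pi_{act}(e),\pi_{time}(e),\pi_{omap}(e)\oplus(case,\{i\}),\pi_{vmap}(e))$; let $E^{ot}=\{e_i\mid e\in E,\ i\in\pi_{omap}(e)(ot)\}$; and let $\preceq_E^{ot}=\{(e'_i,e''_j)\in E^{ot}\times E^{ot}\mid e',e''\in E,\ i\in\pi_{omap}(e')(ot),\ j\in\pi_{omap}(e'')(ot),\ e'\preceq_E e'',\ (e'=e''\Rightarrow i=j)\}$. *)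

From HB Require Import structures.
From mathcomp Require Import all_boot all_order.
From mathcomp Require Import finmap.
Set Implicit Arguments. Unset Strict Implicit. Unset Printing Implicit Defensive.
Import Order.TTheory.
Local Open Scope fset_scope.
Local Open Scope fmap_scope.

(* Universes: EI (event identifiers), Act (activities), Time (totally ordered
   timestamps), OT (object types), OI (object identifiers), Att, Val. *)

Section OCEL.
Variables (EI Act : Type) (dT : Order.disp_t) (Time : orderType dT)
          (OT OI Att : choiceType) (Val : Type).

Record event := Event {
  ev_ei : EI;
  ev_act : Act;
  ev_time : Time;
  ev_omap : {fmap OT -> {fset OI}};
  ev_vmap : {fmap Att -> Val} }.

Definition omap_at (om : {fmap OT -> {fset OI}}) (ot : OT) : {fset OI} :=
  odflt fset0 om.[? ot].

Definition is_object_mapping (typ : OI -> OT) (om : {fmap OT -> {fset OI}}) :=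
  forall ot oi, oi \in omap_at om ot -> typ oi = ot.

Definition is_ocel (E : event -> Prop) (prec : event -> event -> Prop) : Prop :=
  (forall e1 e2, prec e1 e2 -> E e1 /\ E e2) /\
  (forall e, E e -> prec e e) /\
  (forall e1 e2, E e1 -> E e2 -> prec e1 e2 -> prec e2 e1 -> e1 = e2) /\
  (forall e1 e2 e3, prec e1 e2 -> prec e2 e3 -> prec e1 e3) /\
  (forall e1 e2, E e1 -> E e2 -> ev_ei e1 = ev_ei e2 -> e1 = e2) /\
  (forall e1 e2, prec e1 e2 -> (ev_time e1 <= ev_time e2)%O).

Variables (pair : EI -> OI -> EI) (case : OT).

Definition flat_event (e : event) (i : OI) : event :=
  Event (pair (ev_ei e) i) (ev_act e) (ev_time e)
        (ev_omap e).[case <- [fset i]] (ev_vmap e).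

Definition flat_E (E : event -> Prop) (ot : OT) : event -> Prop :=
  fun f => exists e i, E e /\ i \in omap_at (ev_omap e) ot /\ f = flat_event e i.

Definition flat_prec (E : event -> Prop) (prec : event -> event -> Prop)
    (ot : OT) : event -> event -> Prop :=
  fun f1 f2 => exists e' e'' i j,
    E e' /\ E e'' /\
    i \in omap_at (ev_omap e') ot /\ j \in omap_at (ev_omap e'') ot /\
    prec e' e'' /\ (e' = e'' -> i = j) /\
    f1 = flat_event e' i /\ f2 = flat_event e'' j.

End OCEL.

(* A flattened event e_i records the pair (ei(e), i), so by injectivity of
   pairing and uniqueness of identifiers in E it determines both e and i.
   Every law of the flattened order is then inherited from the order on E;
   the only subtle point is that the side condition (e' = e'' -> i = j)
   survives composition, which is where antisymmetry of the order on E is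
   needed. *)
From HB Require Import structures.
From mathcomp Require Import all_boot all_order.
From mathcomp Require Import finmap.

Set Implicit Arguments.
Unset Strict Implicit.
Unset Printing Implicit Defensive.

Section Flattening.

Variables (EI Act : Type) (dT : Order.disp_t) (Time : orderType dT)
          (OT OI Att : choiceType) (Val : Type).
Variables (pair : EI -> OI -> EI) (case : OT).
Hypothesis pair_inj : forall x i y j, pair x i = pair y j -> x = y /\ i = j.

Notation event := (event EI Act Time OT OI Att Val).
Notation flat_event := (flat_event pair case).

Variables (E : event -> Prop) (prec : event -> event -> Prop) (ot : OT).

Notation flat_E := (flat_E pair case E ot).
Notation flat_prec := (flat_prec pair case E prec ot).

Hypothesis ei_uniq : forall e1 e2, E e1 -> E e2 -> ev_ei e1 = ev_ei e2 -> e1 = e2.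
Hypothesis prec_refl : forall e, E e -> prec e e.
Hypothesis prec_anti : forall e1 e2, E e1 -> E e2 -> prec e1 e2 -> prec e2 e1 -> e1 = e2.
Hypothesis prec_trans : forall e1 e2 e3, prec e1 e2 -> prec e2 e3 -> prec e1 e3.
Hypothesis prec_time : forall e1 e2, prec e1 e2 -> (ev_time e1 <= ev_time e2)%O.

Lemma flat_event_inj e d i k : E e -> E d ->
  flat_event e i = flat_event d k -> e = d /\ i = k.
Proof.
intros He Hd Hed.
have [Hei ->] : ev_ei e = ev_ei d /\ i = k.
  exact: pair_inj (f_equal (fun f => ev_ei f) Hed).
by rewrite (ei_uniq He Hd Hei).
Qed.

Lemma flat_prec_rel f1 f2 : flat_prec f1 f2 -> flat_E f1 /\ flat_E f2.
Proof.
intros (e' & e'' & i & j & He' & He'' & Hi & Hj & _ & _ & -> & ->).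
by split; [exists e', i | exists e'', j].
Qed.

Lemma flat_prec_refl f : flat_E f -> flat_prec f f.
Proof.
intros (e & i & He & Hi & ->).
by exists e, e, i, i; repeat split; auto.
Qed.

Lemma flat_prec_anti f1 f2 : flat_prec f1 f2 -> flat_prec f2 f1 -> f1 = f2.
Proof.
intros (e' & e'' & i & j & He' & He'' & _ & _ & Hp & Hij & -> & ->)
       (d' & d'' & k & l & Hd' & Hd'' & _ & _ & Hq & _ & Hd'e'' & Hd''e').
have [? ?] := flat_event_inj He'' Hd' Hd'e''; subst d' k.
have [? ?] := flat_event_inj He' Hd'' Hd''e'; subst d'' l.
have Hee : e' = e'' by apply: prec_anti.
by rewrite (Hij Hee) Hee.
Qed.

Lemma flat_prec_trans f1 f2 f3 : flat_prec f1 f2 -> flat_prec f2 f3 -> flat_prec f1 f3.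
Proof.
intros (e' & e'' & i & j & He' & He'' & Hi & _ & Hp & Hij & -> & ->)
       (d' & d'' & k & l & Hd' & Hd'' & _ & Hl & Hq & Hkl & Hd'e'' & ->).
have [? ?] := flat_event_inj He'' Hd' Hd'e''; subst d' k.
exists e', d'', i, l; repeat split => //; first exact: prec_trans Hp Hq.
move=> He'd''.
have Hee : e' = e'' by apply: prec_anti => //; rewrite He'd''.
by rewrite (Hij Hee); apply: Hkl; rewrite -Hee.
Qed.

Lemma flat_ei_uniq f1 f2 : flat_E f1 -> flat_E f2 -> ev_ei f1 = ev_ei f2 -> f1 = f2.
Proof.
intros (e & i & He & _ & ->) (d & k & Hd & _ & ->) Hei.
have [Hed ->] := pair_inj Hei.
by rewrite (ei_uniq He Hd Hed).
Qed.

Lemma flat_prec_time f1 f2 : flat_prec f1 f2 -> (ev_time f1 <= ev_time f2)%O.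
Proof.
intros (e' & e'' & i & j & _ & _ & _ & _ & Hp & _ & -> & ->).
exact: (prec_time Hp).
Qed.

End Flattening.

Theorem lemma1
  (EI Act : Type) (dT : Order.disp_t) (Time : orderType dT)
  (OT OI Att : choiceType) (Val : Type)
  (typ : OI -> OT) (case : OT)
  (pair : EI -> OI -> EI)
  (pair_inj : forall x i y j, pair x i = pair y j -> x = y /\ i = j)
  (E : event EI Act Time OT OI Att Val -> Prop)
  (prec : event EI Act Time OT OI Att Val -> event EI Act Time OT OI Att Val -> Prop)
  (HE_omap : forall e, E e -> is_object_mapping typ (ev_omap e))
  (HL : is_ocel E prec)
  (ot : OT) :
  is_ocel (flat_E pair case E ot) (flat_prec pair case E prec ot).
Proof.
have [_ [Hrefl [Hanti [Htrans [Huniq Htime]]]]] := HL.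
split; first exact: flat_prec_rel.
split; first exact: (flat_prec_refl Hrefl).
split; first by move=> f1 f2 _ _; exact: (flat_prec_anti pair_inj Huniq Hanti).
split; first exact: (flat_prec_trans pair_inj Huniq Hanti Htrans).
split; first exact: (flat_ei_uniq pair_inj Huniq).
exact: (flat_prec_time Htime).
Qed.
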